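(* Let $X$ be an operator on $(\mathbb C^d)^{\otimes n}$ that commutes with $P(\pi)$ for every permutation $\pi\in\mathfrak S_n$, where $P(\pi)|\psi_1\rangle\otimes\cdots\otimes|\psi_n\rangle=|\psi_{\pi^{-1}(1)}\rangle\otimes\cdots\otimes|\psi_{\pi^{-1}(n)}\rangle$. Then the number of distinct eigenvalues of $X$ satisfies $|\mathrm{spec}(X)|\le(n+1)^d(n+d)^{d^2}$. *)

From HB Require Import structures.
From mathcomp Require Import all_boot all_order all_algebra all_fingroup all_field.
Set Implicit Arguments. Unset Strict Implicit. Unset Printing Implicit Defensive.
Import Order.TTheory GRing.Theory Num.Theory.
Local Open Scope ring_scope.

(* Computational basis of (C^d)^{\otimes n}: tuples j = (j_1,...,j_n),
   encoded as finite functions 'I_n -> 'I_d.  The Hilbert space has dimension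
   tdim d n = #|{ffun 'I_n -> 'I_d}| (= d^n); basis vectors are indexed by
   ordinals 'I_(tdim d n) via enum_val / enum_rank. *)
Definition tbasis (d n : nat) := {ffun 'I_n -> 'I_d}.
Definition tdim (d n : nat) : nat := #|{ffun 'I_n -> 'I_d}|.

Definition tvec (d n : nat) (i : 'I_(tdim d n)) : {ffun 'I_n -> 'I_d} :=
  enum_val i.

(* P(pi) e_{j_1} (x) ... (x) e_{j_n} = e_{j_{pi^-1(1)}} (x) ... (x) e_{j_{pi^-1(n)}}:
   matrix entry (i, j) is 1 iff i_k = j_{pi^-1 k} for all k. *)
Definition permOp (d n : nat) (s : 'S_n) : 'M[algC]_(tdim d n) :=
  \matrix_(i, j) ((tvec i == [ffun k => tvec j (s^-1 k)%g]) %:R).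

From mathcomp Require Import all_boot all_order all_algebra all_fingroup all_field.
Set Implicit Arguments. Unset Strict Implicit. Unset Printing Implicit Defensive.
Import Order.TTheory GRing.Theory Num.Theory.
Local Open Scope ring_scope.

(* If X has k distinct eigenvalues, the powers 1, X, ..., X^(k-1) are linearly
   independent: a vanishing combination sum_i u_i X^i kills every eigenvector,
   so the polynomial sum_i u_i t^i of size <= k has k distinct roots.  All
   these combinations commute with every P(pi), so it suffices to bound the
   dimension of the commutant of the P(pi).

   An operator A in the commutant satisfies A_{pi.x, pi.y} = A_{x,y} for the
   diagonal action of S_n on pairs (x, y) of basis words.  The orbit of (x, y)
   is determined by its "pair type", the multiplicity of each letter pair
   (a, b) among (x_k, y_k), which takes at most (n+1)^(d^2) values; so A is
   determined by its entries at one representative of each type.  Hence the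
   map sending u to those entries of sum_i u_i X^i is injective, which gives
   k <= (n+1)^(d^2) <= (n+1)^d (n+d)^(d^2). *)

Section MatrixPolynomials.
Variables (R : comNzRingType) (m k : nat).
Implicit Types (A B : 'M[R]_m) (u : 'rV[R]_k).

Definition mx_comb A u : 'M[R]_m := \sum_(i < k) u 0 i *: A ^+ i.

Lemma mx_comb_eigenvector A u a (v : 'rV[R]_m) :
  v *m A = a *: v -> v *m mx_comb A u = (rVpoly u).[a] *: v.
Proof.
move=> vA; have vAi i : v *m A ^+ i = a ^+ i *: v.
  elim: i => [|i IHi]; first by rewrite !expr0 mulmx1 scale1r.
  by rewrite exprSr -mulmxE mulmxA IHi -scalemxAl vA scalerA exprSr.
rewrite (horner_coef_wide _ (size_poly _ _)) mulmx_sumr scaler_suml.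
by apply: eq_bigr => i _; rewrite -scalemxAr vAi scalerA coef_rVpoly_ord.
Qed.

Lemma mx_comb_comm A B u :
  A *m B = B *m A -> mx_comb A u *m B = B *m mx_comb A u.
Proof.
move=> AB; have AiB i : A ^+ i *m B = B *m A ^+ i.
  elim: i => [|i IHi]; first by rewrite expr0 mul1mx mulmx1.
  by rewrite exprS -mulmxE -mulmxA IHi !mulmxA AB.
rewrite mulmx_suml mulmx_sumr; apply: eq_bigr => i _.
by rewrite -scalemxAl -scalemxAr AiB.
Qed.

End MatrixPolynomials.

Arguments mx_comb {R m k}.
Arguments mx_comb_eigenvector {R m k A} u {a v}.

Lemma powers_free (F : fieldType) m (A : 'M[F]_m) (s : seq F)
    (u : 'rV[F]_(size s)) :
  uniq s -> all (eigenvalue A) s -> mx_comb A u = 0 -> u = 0.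
Proof.
move=> s_uniq s_eig Au0.
suff p0 : rVpoly u = 0 by rewrite -[u]rVpolyK p0 linear0.
apply/eqP; apply: contraT => p_neq0.
have := max_poly_roots p_neq0 _ s_uniq; rewrite ltnNge size_poly /=; apply.
apply/allP => a /(allP s_eig) /eigenvalueP [v vA v_neq0].
have := mx_comb_eigenvector u vA; rewrite Au0 mulmx0 => /esym/eqP.
by rewrite scaler_eq0 (negbTE v_neq0) orbF.
Qed.

Lemma row_free_dim (F : fieldType) k m (B : 'M[F]_(k, m)) :
  (forall u : 'rV[F]_k, u *m B = 0 -> u = 0) -> (k <= m)%N.
Proof.
move=> kerB0; have : row_free B.
  rewrite -kermx_eq0; apply/eqP/row_matrixP => r; rewrite row0.
  by apply: kerB0; apply/sub_kermxP; exact: row_sub.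
by rewrite /row_free => /eqP <-; exact: rank_leq_col.
Qed.

Section TensorCommutant.
Variables d n : nat.
Local Notation word := {ffun 'I_n -> 'I_d}.
Local Notation pair_count := {ffun 'I_d * 'I_d -> 'I_n.+1}.

Definition symmetric_op (A : 'M[algC]_(tdim d n)) : Prop :=
  forall s : 'S_n, A *m permOp d s = permOp d s *m A.

Definition relabel (s : 'S_n) (x : word) : word := [ffun k => x (s^-1 k)%g].

Lemma relabelK s : cancel (relabel s) (relabel s^-1).
Proof. by move=> x; apply/ffunP=> k; rewrite !ffunE invgK permK. Qed.

Definition tindex (x : word) : 'I_(tdim d n) := enum_rank x.

Lemma tvec_index x : tvec (tindex x) = x. Proof. exact: enum_rankK. Qed.
Lemma tindex_vec i : tindex (tvec i) = i. Proof. exact: enum_valK. Qed.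

Lemma permOpE s i j : permOp d s i j = (i == tindex (relabel s (tvec j)))%:R.
Proof.
rewrite mxE; congr (_%:R); rewrite -/(relabel s (tvec j)).
by rewrite /tindex -[in RHS](enum_valK i) (inj_eq enum_rank_inj).
Qed.

(* Commuting with P(pi) means invariance under the diagonal action on
   entries: comparing the (pi.x, y) entries of A P(pi) and P(pi) A. *)
Lemma symmetric_op_entry A : symmetric_op A ->
  forall s x y, A (tindex (relabel s x)) (tindex (relabel s y)) =
                A (tindex x) (tindex y).
Proof.
move=> A_sym s x y.
have := congr1 (fun M : 'M_(tdim d n) => M (tindex (relabel s x)) (tindex y))
                (A_sym s).
rewrite /= !mxE (bigD1 (tindex (relabel s y))) //= big1; last first.
  by move=> l /negbTE Nl; rewrite permOpE tvec_index Nl mulr0.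
rewrite (bigD1 (tindex x)) //= big1 => [|l Nl]; last first.
  rewrite permOpE (inj_eq enum_rank_inj) (inj_eq (can_inj (relabelK s))).
  have /negbTE -> : x != tvec l.
    by apply: contraNneq Nl => ->; rewrite tindex_vec.
  by rewrite mul0r.
by rewrite !permOpE !tvec_index !eqxx mulr1 mul1r !addr0.
Qed.

Definition pair_word (p : word * word) := [tuple (p.1 k, p.2 k) | k < n].

Definition pair_type (p : word * word) : pair_count :=
  [ffun ab => inord (count_mem ab (pair_word p))].

(* Pairs of the same type lie in the same S_n-orbit: their pair words are
   permutations of each other. *)
Lemma pair_type_orbit p q : pair_type p = pair_type q ->
  exists s, q.1 = relabel s p.1 /\ q.2 = relabel s p.2.
Proof.
move=> pq_type.
have count_eq ab : count_mem ab (pair_word q) = count_mem ab (pair_word p).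
  have := congr1 (fun c : pair_count => val (c ab)) pq_type; rewrite /= !ffunE.
  by rewrite !inordK // ltnS (leq_trans (count_size _ _)) ?size_tuple.
have /tuple_permP [pi qp] : perm_eq (pair_word q) (pair_word p).
  by apply/allP => ab _; rewrite /= count_eq.
have qk k : (q.1 k, q.2 k) = (p.1 (pi k), p.2 (pi k)).
  by have := congr1 (fun t => tnth t k) (val_inj qp); rewrite !tnth_mktuple.
by exists pi^-1%g; split; apply/ffunP => k; rewrite ffunE invgK; case: (qk k).
Qed.

Definition type_rep (c : pair_count) : option (word * word) :=
  [pick p | pair_type p == c].

Lemma type_repP c p : type_rep c = Some p -> pair_type p = c.
Proof. by rewrite /type_rep; case: pickP => // q /eqP <- [<-]. Qed.

Lemma type_rep_occurs p : exists q, type_rep (pair_type p) = Some q.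
Proof.
rewrite /type_rep; case: pickP => [q _|/(_ p)]; first by exists q.
by rewrite eqxx.
Qed.

Lemma symmetric_op_eq0 A : symmetric_op A ->
  (forall c p, type_rep c = Some p -> A (tindex p.1) (tindex p.2) = 0) ->
  A = 0.
Proof.
move=> A_sym A_rep0; apply/matrixP => i j; rewrite mxE.
have [q rep_q] := type_rep_occurs (tvec i, tvec j).
have [s [/= qi qj]] := pair_type_orbit (type_repP rep_q).
rewrite -(tindex_vec i) -(tindex_vec j) qi qj symmetric_op_entry //.
exact: A_rep0 rep_q.
Qed.

End TensorCommutant.

Lemma pair_count_bound (n d : nat) :
  (n.+1 ^ (d * d) <= n.+1 ^ d * (n + d) ^ (d ^ 2))%N.
Proof.
case: d => [|d] //; rewrite -[X in (X <= _)%N]mul1n leq_mul ?expn_gt0 //.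
by rewrite mulnn leq_exp2r // -addSnnS leq_addr.
Qed.

Theorem lemmaA1 (d n : nat) (X : 'M[algC]_(tdim d n)) :
  (forall s : 'S_n, X *m permOp d s = permOp d s *m X) ->
  forall spec : seq algC, uniq spec -> all (eigenvalue X) spec ->
    (size spec <= (n.+1) ^ d * (n + d) ^ (d ^ 2))%N.
Proof.
move=> X_sym spec spec_uniq spec_eig.
apply: leq_trans (pair_count_bound n d).
have -> : (n.+1 ^ (d * d) = #|{ffun 'I_d * 'I_d -> 'I_n.+1}|)%N.
  by rewrite card_ffun card_prod !card_ord.
pose B := \matrix_(i < size spec, c < #|{ffun 'I_d * 'I_d -> 'I_n.+1}|)
  (if type_rep (enum_val c) is Some p then (X ^+ i) (tindex p.1) (tindex p.2)
   else 0).
apply: (@row_free_dim _ _ _ B) => u uB0.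
apply: (powers_free spec_uniq spec_eig).
apply: symmetric_op_eq0 => [s|c p rep_c]; first exact: mx_comb_comm.
have := congr1 (fun r : 'rV_(_) => r 0 (enum_rank c)) uB0.
rewrite /= mxE [RHS]mxE => <-.
by rewrite summxE; apply: eq_bigr => i _; rewrite !mxE enum_rankK rep_c.
Qed.
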